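(* Let $m\ge1$ and let $M$ be the $m\times m$ matrix with entries in $\mathbb{Q}[x,y,t]$ given by $M_{i,j}=\sum_{k=0}^{m}\binom{x-i}{k}\binom{y-j}{k}t^k$ for $1\le i,j\le m$. Then $$\frac{\det(M)}{t^{\binom{m}{2}}}=\sum_{k=0}^{m}\binom{x-m-1+k}{k}\binom{y-m-1+k}{k}t^k.$$
   Context: For a polynomial (or integer) $z$ and an integer $k\ge0$, $\binom{z}{k}=\frac{z(z-1)\cdots(z-k+1)}{k!}$. *)

From HB Require Import structures.
From mathcomp Require Import all_boot all_order all_algebra.
From mathcomp Require Import mpoly.
Set Implicit Arguments. Unset Strict Implicit. Unset Printing Implicit Defensive.
Import GRing.Theory.
Local Open Scope ring_scope.

(* Q[x,y,t] is {mpoly rat[3]}, with x = 'X_0, y = 'X_1, t = 'X_2. *)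
Definition QXYT := {mpoly rat[3]}.

Definition binomp (z : QXYT) (k : nat) : QXYT :=
  (k`!%:R : rat)^-1 *: \prod_(i < k) (z - i%:R).

Definition varx : QXYT := 'X_(0 : 'I_3).
Definition vary : QXYT := 'X_(1 : 'I_3).
Definition vart : QXYT := 'X_(2 : 'I_3).

(* Put a = x - m and b = y - m.  Reversing the order of rows and columns and
   multiplying by the unitriangular Pascal matrix (Vandermonde's convolution)
   turns the matrix into the leading m x m minor of N = C(a) T C(b)^T, where
   C(a) = (binom a (j - i))_{i <= j} is upper unitriangular of size m + 1 and
   T = diag(1, t, ..., t^m).  Vandermonde again gives C(a) C(-a) = 1, hence
   det N = t^C(m+1,2) and adj N = C(-b)^T (det N T^-1) C(-a).  The minor is the
   last diagonal entry of adj N, and binom(-a, k) = (-1)^k binom(a + k - 1, k)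
   brings it to the stated form. *)

From HB Require Import structures.
From mathcomp Require Import all_boot all_order all_algebra.
From mathcomp Require Import perm mpoly.
From mathcomp Require Import ring zify.
Set Implicit Arguments. Unset Strict Implicit. Unset Printing Implicit Defensive.
Import GRing.Theory Num.Theory.
Local Open Scope ring_scope.

Lemma leq_bin2 n k : (k < n)%N -> (k <= 'C(n, 2))%N.
Proof. by case: n => // n lt_kn; rewrite binS bin1; lia. Qed.

Lemma big_ord_trunc (V : nmodType) n c (F : nat -> V) : (c <= n)%N ->
  (forall i, (c <= i < n)%N -> F i = 0) -> \sum_(i < n) F i = \sum_(i < c) F i.
Proof.
move=> le_cn F0; rewrite -!(big_mkord xpredT F) (big_cat_nat (n := c)) //=.
by rewrite addrC big_nat_cond big1 ?add0r // => i /andP[/F0].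
Qed.

Lemma det_row_col_perm (R : comRingType) n (s : 'S_n) (A : 'M[R]_n) :
  \det (row_perm s (col_perm s A)) = \det A.
Proof.
by rewrite row_permE col_permE !det_mulmx !det_perm odd_permV mulrCA -signr_addb addbb mulr1.
Qed.

Lemma adj_diag (R : comRingType) n (A : 'M[R]_n) i : \adj A i i = \det (row' i (col' i A)).
Proof. by rewrite mxE /cofactor -signr_odd oddD addbb mul1r. Qed.

Lemma adj_unique (R : comRingType) n (A B : 'M[R]_n) :
  GRing.lreg (\det A) -> A *m B = (\det A)%:M -> \adj A = B.
Proof.
move=> reg_detA AB; have := mulmxA (\adj A) A B.
rewrite mul_adj_mx AB mul_scalar_mx mul_mx_scalar => /matrixP adjAB.
by apply/matrixP => i j; apply: reg_detA; have := adjAB i j; rewrite !mxE.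
Qed.

Definition pascal_mx {R : nzRingType} n : 'M[R]_n := \matrix_(i, j) 'C(i, j)%:R.

Lemma det_pascal_mx (R : comRingType) n : \det (pascal_mx n : 'M[R]_n) = 1.
Proof.
rewrite det_trig; last first.
  by apply/forallP => i; apply/forallP => j; apply/implyP => lt_ij; rewrite mxE bin_small.
by rewrite big1 // => i _; rewrite mxE binn.
Qed.

Section GeneralizedBinomial.
Variable R : comAlgType rat.
Implicit Types (a b z : R) (k n : nat).

Definition binom z k : R := (k`!%:R : rat)^-1 *: \prod_(i < k) (z - i%:R).

Lemma natrS_lreg n : GRing.lreg (n.+1%:R : R).
Proof.
move=> x y /=; rewrite !mulr_natl -!scaler_nat; apply: scalerI.
by rewrite pnatr_eq0.
Qed.

Lemma binom0 z : binom z 0 = 1.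
Proof. by rewrite /binom big_ord0 invr1 scale1r. Qed.

Lemma binom0n k : binom 0 k = (k == 0)%:R.
Proof.
case: k => [|k]; first exact: binom0.
by rewrite /binom big_ord_recl subr0 mul0r scaler0.
Qed.

Lemma mul_binom_left z k : k.+1%:R * binom z k.+1 = (z - k%:R) * binom z k.
Proof.
rewrite /binom big_ord_recr factS natrM invfM mulr_natl -scaler_nat !scalerA.
by rewrite mulrA divff ?pnatr_eq0 // mul1r -scalerAr mulrC.
Qed.

Lemma binom_Vandermonde a b n :
  \sum_(j < n.+1) binom a j * binom b (n - j) = binom (a + b) n.
Proof.
elim: n => [|n IHn]; first by rewrite big_ord1 !binom0 mulr1.
(* Multiply by n.+1 = j + (n.+1 - j) and absorb each summand with mul_binom_left. *)
apply: (@natrS_lreg n); rewrite mul_binom_left -IHn mulr_sumr.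
have splitn (j : 'I_n.+2) : n.+1%:R = j%:R + (n.+1 - j)%:R :> R.
  by rewrite -natrD subnKC // -ltnS.
under eq_bigr => j _ do rewrite (splitn j) mulrDl.
rewrite big_split /= big_ord_recl mul0r add0r.
rewrite [X in _ + X]big_ord_recr /= subnn mul0r addr0 mulr_sumr -big_split.
apply: eq_bigr => j _ /=; have le_jn : (j <= n)%N by rewrite -ltnS.
rewrite /bump add1n subSS subSn // mulrA mul_binom_left mulrCA mul_binom_left natrB //.
ring.
Qed.

Lemma binom_nat n k : binom n%:R k = 'C(n, k)%:R.
Proof.
elim: k => [|k IHk]; first by rewrite binom0 bin0.
apply: (@natrS_lreg k); rewrite mul_binom_left IHk -natrM mul_bin_left natrM.
have [le_kn | lt_nk] := leqP k n; first by rewrite natrB.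
by rewrite bin_small // !mulr0.
Qed.

Lemma binom_opp a k : binom (- a) k = (-1) ^+ k * binom (a + k%:R - 1) k.
Proof.
rewrite /binom -scalerAr; congr (_ *: _).
rewrite [in RHS](reindex_inj rev_ord_inj) -[k in (-1) ^+ k]card_ord -prodrN.
apply: eq_bigr => i _; rewrite /= natrB // -natr1; ring.
Qed.

Definition binom_mx n a : 'M[R]_n :=
  \matrix_(i, j) if (i <= j)%N then binom a (j - i) else 0.

Lemma binom_mxD n a b : binom_mx n (a + b) = binom_mx n a *m binom_mx n b.
Proof.
apply/matrixP => i j; rewrite !mxE.
pose G l := (if (i <= l)%N then binom a (l - i) else 0) *
            (if (l <= j)%N then binom b (j - l) else 0).
rewrite (eq_bigr (fun l : 'I_n => G l)) => [|l _]; last by rewrite !mxE.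
have [le_ij | lt_ji] := leqP i j; last first.
  rewrite big1 // => l _; rewrite /G; have [le_il | _] := leqP i l; last first.
    by rewrite mul0r.
  by rewrite leqNgt (leq_trans lt_ji le_il) mulr0.
have le_jn := ltn_ord j.
rewrite -(big_mkord xpredT G) (big_cat_nat (n := i)) ?(ltnW (ltn_ord i)) //=.
rewrite (big_cat_nat (m := i) (n := j.+1)) ?leqW //=.
rewrite big_nat_cond big1 ?add0r => [|l /andP[/andP[_ lt_li] _]]; last first.
  by rewrite /G leqNgt lt_li mul0r.
rewrite addrC big_nat_cond big1 ?add0r => [|l /andP[/andP[lt_jl _] _]]; last first.
  by rewrite /G (leqNgt l j) lt_jl mulr0.
rewrite (big_addn 0 _ i) subSn // big_mkord -binom_Vandermonde.
apply: eq_bigr => l _; have := ltn_ord l; rewrite /G => lt_l.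
rewrite leq_addl addnK ifT; last by lia.
by congr (_ * binom b _); lia.
Qed.

Lemma binom_mx0 n : binom_mx n 0 = 1%:M.
Proof.
apply/matrixP => i j; rewrite !mxE binom0n subn_eq0.
by rewrite -val_eqE /= eqn_leq; case: ifP.
Qed.

Lemma mul_binom_mxNr n a : binom_mx n a *m binom_mx n (- a) = 1%:M.
Proof. by rewrite -binom_mxD subrr binom_mx0. Qed.

Lemma mul_binom_mxNl n a : binom_mx n (- a) *m binom_mx n a = 1%:M.
Proof. by rewrite -binom_mxD addNr binom_mx0. Qed.

Lemma det_binom_mx n a : \det (binom_mx n a) = 1.
Proof.
rewrite -det_tr det_trig; last first.
  by apply/forallP => i; apply/forallP => j; apply/implyP => lt_ij; rewrite !mxE leqNgt lt_ij.
by rewrite big1 // => i _; rewrite !mxE leqnn subnn binom0.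
Qed.

Lemma pascal_binom_mx m a :
  pascal_mx m *m row' ord_max (binom_mx m.+1 a) =
  \matrix_(i < m, k < m.+1) binom (a + i%:R) k.
Proof.
apply/matrixP => i k; rewrite !mxE addrC -binom_Vandermonde.
pose F s := binom i%:R s * (if (s <= k)%N then binom a (k - s) else 0).
have F_out s : (minn i k < s)%N -> F s = 0.
  rewrite /F binom_nat => lt_s; have [lt_is | lt_ks] : (i < s)%N \/ (k < s)%N by lia.
    by rewrite bin_small ?mul0r.
  by rewrite leqNgt lt_ks mulr0.
have trunc n : ((minn i k).+1 <= n)%N ->
    \sum_(s < n) F s = \sum_(s < (minn i k).+1) F s.
  by move=> le_n; apply: big_ord_trunc => // s /andP[/F_out].
transitivity (\sum_(s < m) F s).
  by apply: eq_bigr => s _; rewrite !mxE lift_max /F binom_nat.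
transitivity (\sum_(s < k.+1) F s); last first.
  by apply: eq_bigr => s _; rewrite /F -ltnS ltn_ord.
have lt_im := ltn_ord i; by rewrite !trunc //; lia.
Qed.

End GeneralizedBinomial.

Section BinomialGram.
Variables (R : comAlgType rat) (t : R).

Definition tpow_mx n : 'M[R]_n := diag_mx (\row_(k < n) t ^+ k).

Definition binom_gram n a b := binom_mx n a *m tpow_mx n *m (binom_mx n b)^T.

Lemma det_binom_gram n a b : \det (binom_gram n a b) = t ^+ 'C(n, 2).
Proof.
rewrite !det_mulmx det_tr !det_binom_mx mul1r mulr1 det_diag.
under eq_bigr => i _ do rewrite mxE.
by rewrite prodrXr -(big_mkord xpredT (fun i => i)) bin2_sum.
Qed.

Hypothesis t_reg : GRing.lreg t.

Lemma adj_binom_gram n a b :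
  \adj (binom_gram n a b) =
  (binom_mx n (- b))^T *m diag_mx (\row_(k < n) t ^+ ('C(n, 2) - k)) *m binom_mx n (- a).
Proof.
have tpow_mxK : tpow_mx n *m diag_mx (\row_(k < n) t ^+ ('C(n, 2) - k)) =
                (t ^+ 'C(n, 2))%:M.
  rewrite mulmx_diag -diag_const_mx; congr diag_mx.
  by apply/matrixP => i j; rewrite !mxE -exprD subnKC // leq_bin2.
apply: adj_unique; first by rewrite det_binom_gram; exact: lregX.
rewrite det_binom_gram /binom_gram !mulmxA -[_ *m (binom_mx n b)^T *m _]mulmxA.
rewrite -trmx_mul mul_binom_mxNl trmx1 mulmx1 -[_ *m tpow_mx n *m _]mulmxA tpow_mxK.
by rewrite mul_mx_scalar -scalemxAl mul_binom_mxNr scalemx1.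
Qed.

Lemma det_binom_gram_minor m a b :
  \det (row' ord_max (col' ord_max (binom_gram m.+1 a b))) =
  t ^+ 'C(m, 2) * \sum_(k < m.+1) binom (- a) k * binom (- b) k * t ^+ k.
Proof.
rewrite -adj_diag adj_binom_gram mul_mx_diag !mxE (reindex_inj rev_ord_inj) mulr_sumr.
apply: eq_bigr => k _; have le_km : (k <= m)%N by rewrite -ltnS.
rewrite !mxE /= subSS leq_subr subKn //.
have -> : ('C(m.+1, 2) - (m - k) = 'C(m, 2) + k)%N by rewrite binS bin1; lia.
by rewrite exprD; ring.
Qed.

Lemma shifted_binom_gram m a b :
  \matrix_(i < m, j < m) \sum_(k < m.+1) binom (a + i%:R) k * binom (b + j%:R) k * t ^+ k
  = pascal_mx m *m row' ord_max (col' ord_max (binom_gram m.+1 a b)) *m (pascal_mx m)^T.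
Proof.
have -> : row' ord_max (col' ord_max (binom_gram m.+1 a b)) =
          row' ord_max (binom_mx m.+1 a) *m tpow_mx m.+1 *m (row' ord_max (binom_mx m.+1 b))^T.
  apply/matrixP => i j; rewrite /binom_gram /tpow_mx !mul_mx_diag !mxE.
  by apply: eq_bigr => k _; rewrite !mxE.
rewrite -!mulmxA -trmx_mul !mulmxA !pascal_binom_mx /tpow_mx mul_mx_diag.
apply/matrixP => i j; rewrite !mxE; apply: eq_bigr => k _; rewrite !mxE.
by rewrite mulrAC.
Qed.

Lemma det_shifted_binom_sum m a b :
  \det (\matrix_(i < m, j < m)
          \sum_(k < m.+1) binom (a + i%:R) k * binom (b + j%:R) k * t ^+ k) =
  t ^+ 'C(m, 2) * \sum_(k < m.+1) binom (- a) k * binom (- b) k * t ^+ k.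
Proof.
by rewrite shifted_binom_gram !det_mulmx det_tr det_pascal_mx mul1r mulr1 det_binom_gram_minor.
Qed.

Lemma det_binom_sum m x y :
  \det (\matrix_(i < m, j < m)
          \sum_(k < m.+1) binom (x - i.+1%:R) k * binom (y - j.+1%:R) k * t ^+ k) =
  t ^+ 'C(m, 2) *
  \sum_(k < m.+1) binom (x - m.+1%:R + k%:R) k * binom (y - m.+1%:R + k%:R) k * t ^+ k.
Proof.
pose s := perm.perm (@rev_ord_inj m).
have -> : \matrix_(i < m, j < m)
            \sum_(k < m.+1) binom (x - i.+1%:R) k * binom (y - j.+1%:R) k * t ^+ k =
          row_perm s (col_perm s (\matrix_(i < m, j < m) \sum_(k < m.+1)
            binom (x - m%:R + i%:R) k * binom (y - m%:R + j%:R) k * t ^+ k)).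
  apply/matrixP => i j; rewrite !mxE !permE /=; apply: eq_bigr => k _.
  by congr (binom _ _ * binom _ _ * _); rewrite natrB //; ring.
rewrite det_row_col_perm det_shifted_binom_sum; congr (_ * _); apply: eq_bigr => k _.
rewrite !binom_opp mulrACA -exprMn mulrNN mulr1 expr1n mul1r.
by congr (binom _ _ * binom _ _ * _); rewrite -natr1; ring.
Qed.

End BinomialGram.

Lemma vart_neq0 : vart != 0.
Proof.
apply/eqP => /(congr1 (fun p : QXYT => p@_U_(2 : 'I_3))).
by rewrite /vart mcoeffXU eqxx mcoeff0 => /eqP; rewrite oner_eq0.
Qed.

Theorem lemma6 (m : nat) : (0 < m)%N ->
  \det (\matrix_(i < m, j < m)
          \sum_(k < m.+1) binomp (varx - (i.+1)%:R) k * binomp (vary - (j.+1)%:R) k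
                            * vart ^+ k)
  = vart ^+ 'C(m, 2) *
    \sum_(k < m.+1) binomp (varx - (m.+1)%:R + k%:R) k
                    * binomp (vary - (m.+1)%:R + k%:R) k * vart ^+ k.
Proof. by move=> _; apply: (det_binom_sum (mulfI vart_neq0)). Qed.
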